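(* Let $G$ be a graph. Then (i) $\mathrm{gp}(G)\le 2\,\mathrm{ip}(G)$; and (ii) if $V(G)$ can be covered by isometric cycles of $G$, then $\mathrm{gp}(G)\le 3\,\mathrm{ic}(G)$.
   Context: All graphs are finite, simple and connected. A subgraph $H$ of $G$ is isometric if $d_H(x,y)=d_G(x,y)$ for all $x,y\in V(H)$. The isometric-path number $\mathrm{ip}(G)$ is the minimum number of isometric paths (geodesics) of $G$ whose vertex sets cover $V(G)$. The isometric-cycle number $\mathrm{ic}(G)$ is the minimum number of isometric cycles of $G$ whose vertex sets cover $V(G)$. A set $S$ of vertices is a general position set if no three vertices of $S$ lie on a common geodesic of $G$; $\mathrm{gp}(G)$ is the maximum cardinality of a general position set of $G$. *)

From mathcomp Require Import all_boot.
Set Implicit Arguments. Unset Strict Implicit. Unset Printing Implicit Defensive.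

Section GraphDefs.
Variables (T : finType) (e : rel T).

Definition simple_connected_graph : Prop :=
  [/\ symmetric e, irreflexive e & forall x y : T, connect e x y].

Definition reach (k : nat) (x y : T) : Prop :=
  exists p : seq T, [/\ size p = k, path e x p & last x p = y].

Definition is_dist (x y : T) (n : nat) : Prop :=
  reach n x y /\ forall k, reach k x y -> n <= k.

(* the vertex sequence x :: p is a geodesic (isometric path, i.e. a
   shortest path between its end vertices) *)
Definition geodesic (x : T) (p : seq T) : Prop :=
  path e x p /\ is_dist x (last x p) (size p).

(* the vertex sequence c (closed up) is an isometric cycle of G:
   a cycle on >= 3 distinct vertices with d_C = d_G on its vertices *)
Definition isometric_cycle (c : seq T) : Prop :=
  [/\ uniq c, 3 <= size c, cycle e c &
    forall (x0 : T) (i j : nat), i < size c -> j < size c ->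
      let d := if i <= j then j - i else i - j in
      is_dist (nth x0 c i) (nth x0 c j) (minn d (size c - d))].

Definition gp_set (S : {set T}) : Prop :=
  forall x p, geodesic x p -> #|[set v in S | v \in x :: p]| <= 2.

Definition is_gp (n : nat) : Prop :=
  (exists S : {set T}, gp_set S /\ #|S| = n) /\
  (forall S : {set T}, gp_set S -> #|S| <= n).

Definition ip_cover (ps : seq (T * seq T)) : Prop :=
  (forall q, q \in ps -> geodesic q.1 q.2) /\
  (forall v : T, exists2 q, q \in ps & v \in q.1 :: q.2).

Definition ic_cover (cs : seq (seq T)) : Prop :=
  (forall c, c \in cs -> isometric_cycle c) /\
  (forall v : T, exists2 c, c \in cs & v \in c).

Definition is_ip (n : nat) : Prop :=
  (exists ps, ip_cover ps /\ size ps = n) /\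
  (forall ps, ip_cover ps -> n <= size ps).

Definition is_ic (n : nat) : Prop :=
  (exists cs, ic_cover cs /\ size cs = n) /\
  (forall cs, ic_cover cs -> n <= size cs).

End GraphDefs.

From mathcomp Require Import all_boot zify.
Set Implicit Arguments. Unset Strict Implicit. Unset Printing Implicit Defensive.

(* A general position set meets every geodesic in at most two vertices, so a
   cover of V(G) by k geodesics bounds it by 2k. On an isometric cycle C of
   length n, take four vertices in cyclic order v_i, v_j, v_k, v_l: one of the
   two arcs of C from v_i to v_k, through v_j or through v_l, has length at
   most n/2 and is therefore a geodesic of G containing three of them. Hence
   C carries at most three vertices of a general position set, and a cover by
   k isometric cycles bounds it by 3k. *)

Section Covers.
Variable T : finType.

Lemma card_bigcup_seq (I : Type) (r : seq I) (F : I -> {set T}) :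
  #|\bigcup_(i <- r) F i| <= \sum_(i <- r) #|F i|.
Proof.
elim: r => [|i r IH]; first by rewrite !big_nil cards0.
by rewrite !big_cons; apply: leq_trans (leq_card_setU _ _) (leq_add _ IH).
Qed.

Lemma card_le_cover (I : eqType) (r : seq I) (F : I -> {set T}) (S : {set T}) k :
  (forall v, v \in S -> exists2 i, i \in r & v \in F i) ->
  (forall i, i \in r -> #|S :&: F i| <= k) -> #|S| <= k * size r.
Proof.
move=> covS small.
have sub_cover : S \subset \bigcup_(i <- r) (S :&: F i).
  apply/subsetP=> v vS; have [i ir vi] := covS v vS.
  by rewrite (big_rem i ir) !inE vS vi.
apply: leq_trans (subset_leq_card sub_cover) _.
apply: leq_trans (card_bigcup_seq _ _) _.
rewrite big_seq (leq_trans (leq_sum _ small)) //.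
by rewrite -big_seq big_const_seq count_predT iter_addn_0 mulnC.
Qed.

End Covers.

Section Geodesics.
Variables (T : finType) (e : rel T).

Lemma gp_set_geodesic_uniq (S : {set T}) x p (s : seq T) :
  gp_set e S -> geodesic e x p -> uniq s ->
  {subset s <= [set v in S | v \in x :: p]} -> size s <= 2.
Proof.
move=> gpS geo us sub; rewrite -(card_uniqP us).
apply: leq_trans (gpS x p geo); apply: subset_leq_card; exact/subsetP.
Qed.

Lemma walk_geodesic (f : nat -> T) a m :
  (forall t, e (f t) (f t.+1)) -> is_dist e (f a) (f (a + m)) m ->
  geodesic e (f a) (map f (iota a.+1 m)).
Proof.
move=> step dist; split.
  by elim: m a {dist} => [|m IH] a //=; rewrite step IH.
suff -> : last (f a) (map f (iota a.+1 m)) = f (a + m) by rewrite size_map size_iota.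
by elim: m a {dist} => [|m IH] a /=; rewrite ?addn0 ?IH ?addSnnS.
Qed.

Lemma cycle_nth_modS x0 (c : seq T) t : cycle e c -> 0 < size c ->
  e (nth x0 c (t %% size c)) (nth x0 c (t.+1 %% size c)).
Proof.
case: c => [|x s] //= /(pathP x0) step _.
rewrite -[t.+1]addn1 -modnDml addn1.
move: (t %% _) (ltn_pmod t (ltn0Sn (size s))) => r lt_r.
move: (step r); rewrite size_rcons -rcons_cons !nth_rcons /= ltnS => /(_ lt_r).
case: (ltngtP r (size s)) lt_r => [lt_rs _ | gt_rs | -> _].
- by rewrite modn_small.
- by rewrite ltnS leqNgt gt_rs.
- by rewrite modnn.
Qed.

Lemma isometric_cycle_dist x0 (c : seq T) i k : isometric_cycle e c ->
  i <= k < size c ->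
  let d := minn (k - i) (size c - (k - i)) in
  is_dist e (nth x0 c i) (nth x0 c k) d /\ is_dist e (nth x0 c k) (nth x0 c i) d.
Proof.
case=> _ _ _ iso /andP[le_ik lt_kc]; have lt_ic := leq_ltn_trans le_ik lt_kc.
split; first by have := iso x0 i k lt_ic lt_kc; rewrite /= le_ik.
have := iso x0 k i lt_kc lt_ic; rewrite /=.
by case: leqP => [le_ki | //]; have -> : i - k = k - i by lia.
Qed.

Lemma gp_set_shortest_walk (S : {set T}) (f : nat -> T) a b (s : seq nat) :
  gp_set e S -> (forall t, e (f t) (f t.+1)) -> a <= b ->
  is_dist e (f a) (f b) (b - a) -> uniq (map f s) ->
  all (fun t => a <= t <= b) s -> all (fun t => f t \in S) s -> size s <= 2.
Proof.
move=> gpS step le_ab; rewrite -{1}(subnKC le_ab) => dist us s_ab s_S.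
rewrite -(size_map f); apply: (gp_set_geodesic_uniq gpS (walk_geodesic step dist) us).
move=> _ /mapP[t ts ->]; rewrite inE (allP s_S) //=.
change (f t \in map f (iota a (b - a).+1)); rewrite map_f // mem_iota.
by move/allP/(_ t ts): s_ab; lia.
Qed.

Lemma gp_set_isometric_cycle_four x0 (c : seq T) (S : {set T}) i j k l :
  isometric_cycle e c -> gp_set e S -> i < j -> j < k -> k < l -> l < size c ->
  nth x0 c i \in S -> nth x0 c j \in S -> nth x0 c k \in S -> nth x0 c l \in S ->
  False.
Proof.
move=> isoc gpS lt_ij lt_jk lt_kl lt_lc Si Sj Sk Sl.
have [uc _ cyc _] := isoc; have c_gt0 : 0 < size c by lia.
(* [g] walks around the cycle, so the arc from v_k through v_l back to v_i
   is [g] on the index interval [k, size c + i]. *)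
pose g t := nth x0 c (t %% size c).
have step t : e (g t) (g t.+1) := cycle_nth_modS x0 t cyc c_gt0.
have gE t : t < size c -> g t = nth x0 c t by move=> lt_tc; rewrite /g modn_small.
have gcE : g (size c + i) = nth x0 c i by rewrite /g modnDl modn_small //; lia.
have nth_eq t1 t2 : t1 <= l -> t2 <= l -> (nth x0 c t1 == nth x0 c t2) = (t1 == t2).
  by move=> le1 le2; rewrite nth_uniq // (leq_ltn_trans _ lt_lc).
have ik_c : i <= k < size c by lia.
have [dist_ik dist_ki] := isometric_cycle_dist x0 isoc ik_c.
case: (leqP (2 * (k - i)) (size c)) => [short | long].
  suff : size [:: i; j; k] <= 2 by [].
  apply: (gp_set_shortest_walk (a := i) (b := k) gpS step);
    rewrite /= ?gE ?Si ?Sj ?Sk; try lia.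
    by move: dist_ik; have -> : minn (k - i) (size c - (k - i)) = k - i by lia.
  by rewrite !inE !nth_eq; lia.
suff : size [:: k; l; size c + i] <= 2 by [].
apply: (gp_set_shortest_walk (a := k) (b := size c + i) gpS step);
  rewrite /= ?gcE ?gE ?Si ?Sk ?Sl; try lia.
  by move: dist_ki; have -> : minn (k - i) (size c - (k - i)) = size c + i - k by lia.
by rewrite !inE !nth_eq; lia.
Qed.

Lemma card_setI_uniq (S : {set T}) (s : seq T) :
  uniq s -> #|S :&: [set v in s]| = count [in S] s.
Proof.
move=> us; rewrite -size_filter -(card_uniqP (filter_uniq _ us)).
by apply: eq_card => v; rewrite !inE mem_filter.
Qed.

Lemma card_gp_isometric_cycle (S : {set T}) (c : seq T) :
  isometric_cycle e c -> gp_set e S -> #|S :&: [set v in c]| <= 3.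
Proof.
move=> isoc gpS; have [uc c3 _ _] := isoc; case: c c3 isoc uc => [|x0 s] // _ isoc uc.
set c := x0 :: s in isoc uc *.
pose idx := [seq t <- iota 0 (size c) | nth x0 c t \in S].
have -> : #|S :&: [set v in c]| = size idx.
  by rewrite card_setI_uniq // size_filter -{1}(mkseq_nth x0 c) count_map.
have : sorted ltn idx by apply: sorted_filter; [exact: ltn_trans | exact: iota_ltn_sorted].
have : all (gtn (size c)) idx.
  by apply/allP=> t; rewrite mem_filter mem_iota => /and3P[_ _].
have : all (fun t => nth x0 c t \in S) idx := filter_all _ _.
case: idx => [|i [|j [|k [|l idx]]]] //=.
move=> /and5P[Si Sj Sk Sl _] /and5P[_ _ _ lt_lc _].
case/and4P=> lt_ij lt_jk lt_kl _.
by case: (gp_set_isometric_cycle_four isoc gpS lt_ij lt_jk lt_kl lt_lc Si Sj Sk Sl).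
Qed.

End Geodesics.

Theorem corollary3p2 (T : finType) (e : rel T) :
  simple_connected_graph e ->
  (forall g i : nat, is_gp e g -> is_ip e i -> g <= 2 * i) /\
  ((exists cs : seq (seq T), ic_cover e cs) ->
   forall g c : nat, is_gp e g -> is_ic e c -> g <= 3 * c).
Proof.
move=> _; split=> [g i | _ g c] [[S [gpS <-]] _].
  move=> [[ps [[geo cov] <-]] _].
  apply: (card_le_cover (F := fun q => [set v in q.1 :: q.2]))
    => [v _ | [x p] /geo geo_xp].
    by have [q qps vq] := cov v; exists q => //; rewrite inE.
  by rewrite -setIdE; exact: gpS.
move=> [[cs [[iso cov] <-]] _].
apply: (card_le_cover (F := fun s : seq T => [set v in s])) => [v _ | s /iso iso_s].
  by have [s scs vs] := cov v; exists s => //; rewrite inE.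
exact: card_gp_isometric_cycle iso_s gpS.
Qed.
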